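(* Let $n \geq 2$, $d \geq 1$, $g \geq 0$ be integers satisfying $g < d^2/4n + 1$. Then there are integers $d_0 \geq 1$ and $g_0 \geq 0$ such that $d_0 \equiv d \pmod{2n}$ and $d_0^2-4n(g_0-1)=d^2-4n(g-1)$, and satisfying one of the two following conditions: (a) $g_0 < d_0-n$; (b) $d_0 \leq 2n$ and $d_0-n \leq g_0 < d_0^2/4n + 1$. *)

From Stdlib Require Export ZArith.

(* The quantity [d^2 - 4n(g-1)] and the class of [d] mod [2n] are both
   invariant under the move [(d, g) -> (d - 2n, g - d + n)].  While
   [d - n <= g] and [2n < d], this move keeps [d >= 1] and [g >= 0] and
   strictly decreases [d], so iterating it ends at a pair with [g < d - n] or
   with [d <= 2n] and [d - n <= g].  In the latter case the bound
   [4n(g0-1) < d0^2] of (b) is the positivity of the invariant. *)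
From Stdlib Require Import ZArith Lia.
Open Scope Z_scope.

Section Reduction.

Variable n : Z.
Hypothesis n_pos : 1 <= n.

Definition disc (d g : Z) : Z := d ^ 2 - 4 * n * (g - 1).

Lemma disc_reduce (d g : Z) : disc (d - 2 * n) (g - d + n) = disc d g.
Proof. unfold disc; ring. Qed.

Lemma divide_sub_2n (d d0 : Z) : (2 * n | d0 - (d - 2 * n)) -> (2 * n | d0 - d).
Proof.
  intros Hdiv.
  replace (d0 - d) with (d0 - (d - 2 * n) - 2 * n) by ring.
  apply Z.divide_sub_r; [exact Hdiv | apply Z.divide_refl].
Qed.

Lemma reduce_exists (d : Z) : 1 <= d -> forall g : Z, 0 <= g ->
  exists d0 g0 : Z,
    1 <= d0 /\ 0 <= g0 /\ (2 * n | d0 - d) /\ disc d0 g0 = disc d g /\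
    (g0 < d0 - n \/ (d0 <= 2 * n /\ d0 - n <= g0)).
Proof.
  intros Hd; assert (Hd_nonneg : 0 <= d) by lia; revert Hd.
  pattern d; apply Z_lt_induction; [clear d Hd_nonneg | exact Hd_nonneg].
  intros d IH Hd g Hg.
  assert (Hstop : g < d - n \/ (d <= 2 * n /\ d - n <= g) \/ (2 * n < d /\ d - n <= g))
    by lia.
  destruct Hstop as [Hstop | [Hstop | [Hbig Hge]]].
  - exists d, g; repeat split; auto; exists 0; ring.
  - exists d, g; repeat split; try tauto; exists 0; ring.
  - destruct (IH (d - 2 * n) ltac:(lia) ltac:(lia) (g - d + n) ltac:(lia))
      as (d0 & g0 & Hd0 & Hg0 & Hdiv & Hdisc & Hend).
    exists d0, g0; repeat split; auto.
    + exact (divide_sub_2n d d0 Hdiv).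
    + rewrite Hdisc; apply disc_reduce.
Qed.

End Reduction.

Theorem lemma3p10 (n d g : Z) :
  2 <= n -> 1 <= d -> 0 <= g ->
  4 * n * (g - 1) < d ^ 2 ->
  exists d0 g0 : Z,
    1 <= d0 /\ 0 <= g0 /\
    (2 * n | d0 - d) /\
    d0 ^ 2 - 4 * n * (g0 - 1) = d ^ 2 - 4 * n * (g - 1) /\
    (g0 < d0 - n \/
     (d0 <= 2 * n /\ d0 - n <= g0 /\ 4 * n * (g0 - 1) < d0 ^ 2)).
Proof.
  intros Hn Hd Hg Hdisc_pos.
  destruct (reduce_exists n ltac:(lia) d Hd g Hg)
    as (d0 & g0 & Hd0 & Hg0 & Hdiv & Hdisc & Hend).
  unfold disc in Hdisc.
  exists d0, g0; repeat split; auto.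
  destruct Hend as [Ha | [Hb1 Hb2]]; [left; exact Ha | right; repeat split; lia].
Qed.
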